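(* Let $\mathbb{H}=\{z\in\mathbb{C}:\operatorname{Im}z>0\}$. For all $z_1,z_2\in\mathbb{H}$, \[ b_{\mathbb{H},2}(z_1,z_2)=\frac{\sqrt2\,|z_1-z_2|}{\sqrt{|z_1-z_2|^2+|\operatorname{Im}(z_1+z_2)|^2}}=\frac{|z_1-z_2|}{\sqrt{|z_1-m|^2+|z_2-m|^2}}, \] where $m=\operatorname{Re}(z_1+z_2)/2$ (viewed as a point of the real axis).
   Context: For a domain $G\subsetneq\mathbb{C}$ and $z_1,z_2\in G$, $b_{G,2}(z_1,z_2)=\sup_{z\in\partial G}\frac{|z_1-z_2|}{\sqrt{|z_1-z|^2+|z-z_2|^2}}$. *)

From Stdlib Require Import Reals.
From Coquelicot Require Import Coquelicot.
Open Scope R_scope.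

Definition boundary (G : C -> Prop) (z : C) : Prop :=
  forall eps : R, 0 < eps ->
    (exists w : C, G w /\ Cmod (w - z) < eps) /\
    (exists w : C, ~ G w /\ Cmod (w - z) < eps).

Definition b_G2 (G : C -> Prop) (z1 z2 : C) : Rbar :=
  Lub_Rbar (fun r : R => exists z : C, boundary G z /\
    r = Cmod (z1 - z2) / sqrt (Cmod (z1 - z) ^ 2 + Cmod (z - z2) ^ 2)).

Definition UHP (z : C) : Prop := 0 < Im z.

(* The boundary of the upper half-plane is the real axis.  For a real point x
   the denominator satisfies |z1 - x|^2 + |x - z2|^2 = |z1 - m|^2 + |z2 - m|^2
   + 2 (x - m)^2, so the supremum is attained at x = m; and the parallelogram
   law gives 2 (|z1 - m|^2 + |z2 - m|^2) = |z1 - z2|^2 + Im(z1 + z2)^2. *)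
From Stdlib Require Import Reals Lra Psatz.
From Coquelicot Require Import Coquelicot.
Open Scope R_scope.

Lemma Rabs_Im_sub_le_Cmod (w z : C) : Rabs (Im w - Im z) <= Cmod (w - z).
Proof.
  change (Im w - Im z) with (Im (w - z)%C).
  exact (Rle_trans _ _ _ (Rmax_r _ _) (Rmax_Cmod (w - z)%C)).
Qed.

Lemma Cmod_add_imag_sub (z : C) (e : R) : Cmod (z + (0, e) - z)%C = Rabs e.
Proof.
  destruct z as [x y]; unfold Cmod; simpl.
  rewrite <- sqrt_Rsqr_abs; f_equal; unfold Rsqr; ring.
Qed.

Lemma boundary_UHP_Im (z : C) : boundary UHP z -> Im z = 0.
Proof.
  unfold UHP; intros Hz.
  destruct (Rtotal_order (Im z) 0) as [Hneg | [Hzero | Hpos]]; [| exact Hzero |].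
  - destruct (Hz (- Im z)) as [[w [Hw Hwz]] _]; [lra |].
    pose proof (Rabs_Im_sub_le_Cmod w z); pose proof (Rle_abs (Im w - Im z)).
    lra.
  - destruct (Hz (Im z)) as [_ [w [Hw Hwz]]]; [lra |].
    pose proof (Rabs_Im_sub_le_Cmod w z); pose proof (Rle_abs (- (Im w - Im z))).
    rewrite Rabs_Ropp in *; lra.
Qed.

Lemma boundary_UHP_real (z : C) : Im z = 0 -> boundary UHP z.
Proof.
  unfold UHP; intros Hz eps Heps; split.
  - exists (z + (0, eps / 2)%R)%C.
    rewrite Cmod_add_imag_sub, Rabs_pos_eq by lra.
    unfold Im in *; simpl; split; lra.
  - exists (z + (0, - (eps / 2))%R)%C.
    rewrite Cmod_add_imag_sub, Rabs_Ropp, Rabs_pos_eq by lra.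
    unfold Im in *; simpl; split; lra.
Qed.

Lemma boundary_UHP_iff (z : C) : boundary UHP z <-> Im z = 0.
Proof. split; [apply boundary_UHP_Im | apply boundary_UHP_real]. Qed.

Section RealPoint.

Variables z1 z2 : C.

Let mid : R := Re (z1 + z2) / 2.

Lemma Cmod_sqr_sum_real_point (z : C) : Im z = 0 ->
  Cmod (z1 - z) ^ 2 + Cmod (z - z2) ^ 2 =
  Cmod (z1 - mid) ^ 2 + Cmod (z2 - mid) ^ 2 + 2 * (Re z - mid) ^ 2.
Proof.
  intros Hz; unfold mid; rewrite !Cmod2_alt.
  destruct z1 as [a b], z2 as [c d], z as [x y]; simpl in *; subst y; field.
Qed.

Lemma Cmod_sqr_sum_midpoint :
  Cmod (z1 - z2) ^ 2 + Rabs (Im (z1 + z2)) ^ 2 =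
  2 * (Cmod (z1 - mid) ^ 2 + Cmod (z2 - mid) ^ 2).
Proof.
  unfold mid; rewrite pow2_abs, !Cmod2_alt.
  destruct z1 as [a b], z2 as [c d]; simpl; field.
Qed.

Lemma Cmod_sqr_sum_midpoint_pos : 0 < Im z1 ->
  0 < Cmod (z1 - mid) ^ 2 + Cmod (z2 - mid) ^ 2.
Proof.
  intros H1; rewrite !Cmod2_alt.
  replace (Im (z1 - mid)) with (Im z1) by (unfold Im; simpl; ring).
  pose proof (pow2_ge_0 (Re (z1 - mid))); pose proof (pow2_ge_0 (Re (z2 - mid))).
  pose proof (pow2_ge_0 (Im (z2 - mid))); nra.
Qed.

End RealPoint.

Lemma Rdiv_sqrt_le_contravar (a s t : R) :
  0 <= a -> 0 < s -> s <= t -> a / sqrt t <= a / sqrt s.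
Proof.
  intros Ha Hs Hst; apply Rmult_le_compat_l; [exact Ha |].
  apply Rinv_le_contravar; [apply sqrt_lt_R0; exact Hs | apply sqrt_le_1_alt, Hst].
Qed.

Lemma Lub_Rbar_attained (E : R -> Prop) (M : R) :
  E M -> (forall r, E r -> r <= M) -> Lub_Rbar E = Finite M.
Proof.
  intros HM Hub; apply is_lub_Rbar_unique; split.
  - exact Hub.
  - intros b Hb; exact (Hb M HM).
Qed.

Theorem theorem3p12 (z1 z2 : C) (h1 : UHP z1) (h2 : UHP z2) :
  let m : C := RtoC (Re (z1 + z2) / 2) in
  b_G2 UHP z1 z2 =
    Finite (sqrt 2 * Cmod (z1 - z2) /
            sqrt (Cmod (z1 - z2) ^ 2 + Rabs (Im (z1 + z2)) ^ 2)) /\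
  sqrt 2 * Cmod (z1 - z2) /
    sqrt (Cmod (z1 - z2) ^ 2 + Rabs (Im (z1 + z2)) ^ 2) =
  Cmod (z1 - z2) / sqrt (Cmod (z1 - m) ^ 2 + Cmod (z2 - m) ^ 2).
Proof.
  intros m.
  pose proof (Cmod_sqr_sum_midpoint_pos z1 z2 h1) as Hpos.
  assert (Hsqrt2 : 0 < sqrt 2) by (apply sqrt_lt_R0; lra).
  assert (Hsqrt : 0 < sqrt (Cmod (z1 - m) ^ 2 + Cmod (z2 - m) ^ 2))
    by (apply sqrt_lt_R0; exact Hpos).
  assert (Heq : sqrt 2 * Cmod (z1 - z2) /
      sqrt (Cmod (z1 - z2) ^ 2 + Rabs (Im (z1 + z2)) ^ 2) =
    Cmod (z1 - z2) / sqrt (Cmod (z1 - m) ^ 2 + Cmod (z2 - m) ^ 2)).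
  { rewrite Cmod_sqr_sum_midpoint, sqrt_mult by lra; fold m; field; lra. }
  split; [rewrite Heq | exact Heq].
  apply Lub_Rbar_attained.
  - exists m; split; [apply boundary_UHP_iff; reflexivity |].
    rewrite Cmod_sqr_sum_real_point by reflexivity.
    unfold m; simpl; f_equal; f_equal; ring.
  - intros r [z [Hz ->]]; apply boundary_UHP_iff in Hz.
    rewrite Cmod_sqr_sum_real_point by exact Hz; fold m.
    apply Rdiv_sqrt_le_contravar; [apply Cmod_ge_0 | exact Hpos |].
    pose proof (pow2_ge_0 (Re z - Re (z1 + z2) / 2)); lra.
Qed.
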